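(* Let $\Omega\subset\mathbb{R}^d$ ($d=2,3$) be a convex polygonal domain with a conforming mesh $\mathcal T$ of quadrilaterals/hexahedra, vertices $\vec x_i$, and let $\mathbb Q_1$ be the space of continuous piecewise bilinear (trilinear) functions on $\mathcal T$. Fix $\mathrm{Wi}>0$, $\beta\in(0,1)$, and a Dirichlet datum $\vec w$ with $\vec w\cdot\vec n=0$ on $\partial\Omega$. Consider the following fully discrete scheme for the Stokes flow of an Oldroyd-B fluid. Let $\vec\Sigma^0_h$ be the bilinear (trilinear) interpolant of a symmetric initial conformation tensor $\boldsymbol\sigma^0$. For $n\ge1$: (i) find $\vec u^n_h\in\mathbb Q_1^d$ with $\vec u^n_h|_{\partial\Omega}=\Pi_1\vec w$ and $p^n_h\in\mathbb Q_1$ with $$2\beta\int_\Omega\varepsilon(\vec u^n_h):\varepsilon(\vec v_h)-\int_\Omega p^n_h\operatorname{div}\vec v_h-\int_\Omega q_h\operatorname{div}\vec u^n_h-\int_\Omega(p^n_h-\Pi_0p^n_h)(q_h-\Pi_0q_h)=\frac{\beta-1}{\mathrm{Wi}}\int_\Omega\vec\Sigma^{n-1}_h:\varepsilon(\vec v_h)$$ for all $\vec v_h\in\mathbb Q_1^d$ vanishing on $\partial\Omega$ and all $q_h\in\mathbb Q_1$; (ii) at each vertex $\vec x_i$ compute $$\tfrac{1}{\Delta t}\big(\vec\Sigma^n_h(\vec x_i)-\vec F^n_{h,\Delta t}(\vec x_i)\,\vec\Sigma^{n-1}_h(\vec y^n_{h,\Delta t}(\vec x_i))\,\vec F^n_{h,\Delta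 t}(\vec x_i)^T\big)+\tfrac{1}{\mathrm{Wi}}(\vec\Sigma^n_h(\vec x_i)-\vec I)=0,$$ where $\vec y^n_{h,\Delta t}(\vec x)=\vec x-\Delta t\,\vec u^n_h(\vec x)$, $\vec F^n_{h,\Delta t}(\vec x_i)=\vec I+\Delta t\,\nabla\vec u^n_h(\vec x_i)$ with $\nabla\vec u^n_h(\vec x_i):=\frac{1}{|\hat{\vec x}_i|}\sum_{K\subseteq\hat{\vec x}_i}\int_K\nabla\vec u^n_h$, and $\vec\Sigma^{n-1}_h$ is evaluated at non-vertex points by bilinear (trilinear) interpolation of its vertex values. If $\boldsymbol\sigma^0$ is positive definite, then at each time step there exists $\Delta t>0$ such that the discrete conformation tensor $\vec\Sigma^n_h$ remains positive definite.
   Context: $\varepsilon(\vec v)=\tfrac12(\nabla\vec v+(\nabla\vec v)^T)$; $\Pi_0$ is the $L^2$ projection onto piecewise constants on $\mathcal T$; $\Pi_1$ is an interpolant onto $\mathbb Q_1$ traces; $\hat{\vec x}_i=\{K\in\mathcal T:\vec x_i\in\overline K\}$ is the patch of elements around vertex $\vec x_i$; $\vec I$ is the identity. The discrete conformation tensor is stored by its values at vertices and identified with the $\mathbb Q_1$ interpolant of these values. *)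

From HB Require Import structures.
From mathcomp Require Import all_boot all_order all_algebra.
From mathcomp Require Import all_classical all_reals all_analysis.
Set Implicit Arguments. Unset Strict Implicit. Unset Printing Implicit Defensive.
Import Order.TTheory GRing.Theory Num.Theory.
Import numFieldNormedType.Exports.
Local Open Scope ring_scope.
Local Open Scope classical_set_scope.

Section OldroydB.
Variable R : realType.
Variable d : nat.

Definition dotp (a b : 'rV[R]_d) : R := (a *m b^T) 0 0.
Definition ddot (A B : 'M[R]_d) : R := \tr (A *m B^T).
Definition posdef (M : 'M[R]_d) : Prop :=
  M^T = M /\ forall v : 'rV[R]_d, v != 0 -> 0 < (v *m M *m v^T) 0 0.

Variable m : nat.
Variables (nrm : 'I_m -> 'rV[R]_d) (cst : 'I_m -> R).

Definition inOmega (x : 'rV[R]_d) : Prop := forall k, dotp x (nrm k) < cst k.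
Definition inOmegabar (x : 'rV[R]_d) : Prop := forall k, dotp x (nrm k) <= cst k.
Definition onBoundary (x : 'rV[R]_d) : Prop :=
  inOmegabar x /\ exists k, dotp x (nrm k) = cst k.

Definition convex_polygonal_domain : Prop :=
  (forall k, dotp (nrm k) (nrm k) = 1) /\
  (exists x, inOmega x) /\
  (exists M : R, forall x, inOmegabar x -> forall j, `|x 0 j| <= M).

(* w . n = 0 on the boundary, at every boundary point where the outward
   unit normal is well defined (all active constraints share normal n_k). *)
Definition tangential (w : 'rV[R]_d -> 'rV[R]_d) : Prop :=
  forall x k, inOmegabar x -> dotp x (nrm k) = cst k ->
    (forall j, dotp x (nrm j) = cst j -> nrm j = nrm k) ->
    dotp (w x) (nrm k) = 0.

(* ---------- the mesh: vertices V, elements K, each element being the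
   image of the reference cube [0,1]^d by the Q1 (bi/trilinear) map
   built on its 2^d corners, indexed by {0,1}^d ---------- *)
Variables (V K : finType).
Variable xv : V -> 'rV[R]_d.
Variable loc : K -> {ffun 'I_d -> bool} -> V.

Definition cube : set 'rV[R]_d := [set xi | forall j, 0 <= xi 0 j <= 1].

Definition shape (a : {ffun 'I_d -> bool}) (xi : 'rV[R]_d) : R :=
  \prod_(j < d) (if a j then xi 0 j else 1 - xi 0 j).
Definition dshape (a : {ffun 'I_d -> bool}) (k : 'I_d) (xi : 'rV[R]_d) : R :=
  (if a k then 1 else -1) *
  \prod_(j < d | j != k) (if a j then xi 0 j else 1 - xi 0 j).

Definition refmap (T : K) (xi : 'rV[R]_d) : 'rV[R]_d :=
  \sum_a shape a xi *: xv (loc T a).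
(* Jacobian: (j,k) entry = d (F_T)_j / d xi_k *)
Definition jac (T : K) (xi : 'rV[R]_d) : 'M[R]_d :=
  \matrix_(j, k) \sum_a dshape a k xi * xv (loc T a) 0 j.
Definition elem (T : K) : set 'rV[R]_d := refmap T @` cube.

Definition face (c : {ffun 'I_d -> option bool}) : set 'rV[R]_d :=
  [set xi | cube xi /\ forall j b, c j = Some b -> xi 0 j = (nat_of_bool b)%:R].
Definition facecorners (c : {ffun 'I_d -> option bool}) : set {ffun 'I_d -> bool} :=
  [set a | forall j b, c j = Some b -> a j = b].

Definition conforming_mesh : Prop :=
  injective xv /\
  (forall T, injective (loc T)) /\
  (forall T xi1 xi2, cube xi1 -> cube xi2 -> refmap T xi1 = refmap T xi2 -> xi1 = xi2) /\
  (forall T xi, cube xi -> \det (jac T xi) != 0) /\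
  [set x | exists T, elem T x] = [set x | inOmegabar x] /\
  (forall i, exists T a, loc T a = i) /\
  (forall T T', T != T' ->
     elem T `&` elem T' = set0 \/
     exists c c' : {ffun 'I_d -> option bool},
       (exists j, c j != None) /\
       elem T `&` elem T' = refmap T @` face c /\
       elem T `&` elem T' = refmap T' @` face c' /\
       loc T @` facecorners c = loc T' @` facecorners c').

(* ---------- Q1 functions, stored by their vertex values ---------- *)
Definition q1s (P : V -> R) (T : K) (xi : 'rV[R]_d) : R :=
  \sum_a shape a xi * P (loc T a).
Definition q1v (U : V -> 'rV[R]_d) (T : K) (xi : 'rV[R]_d) : 'rV[R]_d :=
  \sum_a shape a xi *: U (loc T a).
Definition q1m (S : V -> 'M[R]_d) (T : K) (xi : 'rV[R]_d) : 'M[R]_d :=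
  \sum_a shape a xi *: S (loc T a).

(* physical gradient of a Q1 vector field on element T at the point
   refmap T xi: (j,k) entry = d u_j / d x_k *)
Definition refgrad (U : V -> 'rV[R]_d) (T : K) (xi : 'rV[R]_d) : 'M[R]_d :=
  \matrix_(j, k) \sum_a dshape a k xi * U (loc T a) 0 j.
Definition grad (U : V -> 'rV[R]_d) (T : K) (xi : 'rV[R]_d) : 'M[R]_d :=
  refgrad U T xi *m invmx (jac T xi).
Definition epsilon (U : V -> 'rV[R]_d) (T : K) (xi : 'rV[R]_d) : 'M[R]_d :=
  (1 / 2 : R) *: (grad U T xi + (grad U T xi)^T).
Definition divg (U : V -> 'rV[R]_d) (T : K) (xi : 'rV[R]_d) : R :=
  \tr (grad U T xi).

Fixpoint cubeint (n : nat) : (('I_n -> R) -> R) -> R :=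
  match n return (('I_n -> R) -> R) -> R with
  | 0 => fun h => h (fun _ => 0)
  | n'.+1 => fun h =>
      Rintegral (@lebesgue_measure R) `[0%R, 1%R]
        (fun t : R => cubeint (fun f : 'I_n' -> R =>
           h (fun i : 'I_n'.+1 => if unlift ord0 i is Some j then f j else t)))
  end.

(* integral over the element T of a function given in reference
   coordinates (change of variables x = refmap T xi) *)
Definition elemint (T : K) (g : 'rV[R]_d -> R) : R :=
  cubeint (fun f : 'I_d -> R =>
    let xi := \row_j f j in g xi * `|\det (jac T xi)|).
Definition elemintM (T : K) (G : 'rV[R]_d -> 'M[R]_d) : 'M[R]_d :=
  \matrix_(j, k) elemint T (fun xi => G xi j k).
Definition measK (T : K) : R := elemint T (fun _ => 1).

Definition pi0 (P : V -> R) (T : K) : R := elemint T (q1s P T) / measK T.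

Definition inpatch (i : V) (T : K) : bool :=
  `[< exists xi, cube xi /\ refmap T xi = xv i >].
Definition nodalgrad (U : V -> 'rV[R]_d) (i : V) : 'M[R]_d :=
  (\sum_(T | inpatch i T) measK T)^-1 *:
    \sum_(T | inpatch i T) elemintM T (grad U T).

Definition stokes_step (beta Wi : R) (w : 'rV[R]_d -> 'rV[R]_d)
  (Sprev : V -> 'M[R]_d) (U : V -> 'rV[R]_d) (P : V -> R) : Prop :=
  (forall i, onBoundary (xv i) -> U i = w (xv i)) /\
  forall (Vt : V -> 'rV[R]_d) (Q : V -> R),
    (forall i, onBoundary (xv i) -> Vt i = 0) ->
    \sum_T elemint T (fun xi =>
        2 * beta * ddot (epsilon U T xi) (epsilon Vt T xi)
      - q1s P T xi * divg Vt T xi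
      - q1s Q T xi * divg U T xi
      - (q1s P T xi - pi0 P T) * (q1s Q T xi - pi0 Q T))
    = (beta - 1) / Wi *
      \sum_T elemint T (fun xi => ddot (q1m Sprev T xi) (epsilon Vt T xi)).

Definition transport_step (Wi dt : R) (U : V -> 'rV[R]_d)
  (Sprev Snew : V -> 'M[R]_d) : Prop :=
  forall i, exists T xi, cube xi /\ refmap T xi = xv i - dt *: U i /\
    let F := 1%:M + dt *: nodalgrad U i in
    dt^-1 *: (Snew i - F *m q1m Sprev T xi *m F^T) + Wi^-1 *: (Snew i - 1%:M) = 0.

End OldroydB.

From Pilot Require Import Defs.
From HB Require Import structures.
From mathcomp Require Import all_boot all_order all_algebra.
From mathcomp Require Import all_classical all_reals all_analysis.
From mathcomp Require Import ring lra.
Set Implicit Arguments. Unset Strict Implicit. Unset Printing Implicit Defensive.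
Import Order.TTheory GRing.Theory Num.Theory.
Import numFieldNormedType.Exports.
Local Open Scope ring_scope.
Local Open Scope classical_set_scope.

(* Step (ii) has the explicit solution
   Sigma^n(x_i) = (Wi + dt)^-1 (Wi F M F^T + dt I),
   where M is the Q1 interpolant of Sigma^{n-1} at the foot x_i - dt u(x_i).
   When the foot lies in the closed domain it lies in some element, so M is a
   combination of positive definite vertex values with nonnegative weights and
   Sigma^n is positive definite.  Feet of interior vertices stay in the domain
   for small dt; at a boundary vertex u = w, and w points weakly inward across
   every active face.  The latter goes by induction on the number of active
   constraints: if w.n_k < 0 at a boundary point, either some direction leads
   to nearby boundary points with fewer active constraints where, by
   continuity, w still points outward across an active face, or all active
   normals coincide and tangentiality forces w.n_k = 0. *)

Lemma exists_uniform_small (R : realFieldType) (I : finType) (P : pred I)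
    (g h : I -> R) :
  (forall i, P i -> 0 < h i) ->
  exists2 e : R, 0 < e & forall i, P i -> e * `|g i| < h i.
Proof.
move=> h_gt0; pose S := \sum_(i | P i) `|g i| / h i.
have gh_ge0 i : P i -> 0 <= `|g i| / h i by move=> Pi; rewrite divr_ge0 // ltW ?h_gt0.
have S_ge0 : 0 <= S by apply: sumr_ge0.
exists (1 + S)^-1; first by rewrite invr_gt0; lra.
move=> i Pi; have hi := h_gt0 i Pi.
have le_S : `|g i| / h i <= S.
  by rewrite /S (bigD1 i) //= lerDl; apply: sumr_ge0 => j /andP[Pj _]; exact: gh_ge0.
rewrite ltr_pdivrMl; last by lra.
have -> : `|g i| = `|g i| / h i * h i by rewrite divfK // gt_eqF.
by rewrite ltr_pM2r //; lra.
Qed.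

Arguments exists_uniform_small {R I} P g h.

Section DotProduct.
Variables (R : realType) (d : nat).
Implicit Types (a b c : 'rV[R]_d) (t : R).

Lemma dotpE a b : dotp a b = \sum_k a 0 k * b 0 k.
Proof. by rewrite /dotp mxE; apply: eq_bigr => k _; rewrite mxE. Qed.

Lemma dotpC a b : dotp a b = dotp b a.
Proof. by rewrite !dotpE; apply: eq_bigr => k _; rewrite mulrC. Qed.

Lemma dotpDl a b c : dotp (a + b) c = dotp a c + dotp b c.
Proof. by rewrite !dotpE -big_split; apply: eq_bigr => k _; rewrite mxE mulrDl. Qed.

Lemma dotpZl t a c : dotp (t *: a) c = t * dotp a c.
Proof. by rewrite !dotpE mulr_sumr; apply: eq_bigr => k _; rewrite mxE mulrA. Qed.

Lemma dotpNl a c : dotp (- a) c = - dotp a c.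
Proof. by rewrite -scaleN1r dotpZl mulN1r. Qed.

Lemma dotpBl a b c : dotp (a - b) c = dotp a c - dotp b c.
Proof. by rewrite dotpDl dotpNl. Qed.

Lemma dotpZr t a c : dotp a (t *: c) = t * dotp a c.
Proof. by rewrite dotpC dotpZl dotpC. Qed.

Lemma dotpBr a b c : dotp a (b - c) = dotp a b - dotp a c.
Proof. by rewrite dotpC dotpBl !(dotpC a). Qed.

Lemma dotp_ge0 a : 0 <= dotp a a.
Proof. by rewrite dotpE; apply: sumr_ge0 => k _; rewrite -expr2 sqr_ge0. Qed.

Lemma dotp_eq0 a : (dotp a a == 0) = (a == 0).
Proof.
apply/idP/eqP => [|->]; last by rewrite dotpE big1 // => k _; rewrite mxE mul0r.
rewrite dotpE psumr_eq0 => [/allP a0|k _]; last by rewrite -expr2 sqr_ge0.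
apply/rowP => k; rewrite mxE; apply/eqP.
by have := a0 k (mem_index_enum _); rewrite mulf_eq0 orbb.
Qed.

Lemma dotp_gt0 a : a != 0 -> 0 < dotp a a.
Proof. by move=> a0; rewrite lt_def dotp_eq0 a0 dotp_ge0. Qed.

Lemma dotp_le_norm a b : `|dotp a b| <= `|a| * \sum_k `|b 0 k|.
Proof.
rewrite dotpE mulr_sumr; apply: le_trans (ler_norm_sum _ _ _) _.
apply: ler_sum => k _; rewrite normrM ler_wpM2r //.
have -> : `|a| = mx_norm a by [].
by rewrite mx_normrE; apply/bigmax_geP; right; exists (0, k).
Qed.

Lemma unit_proportional_eq (s t : R) a b :
  dotp a a = 1 -> dotp b b = 1 -> 0 < s * t -> s *: a = t *: b -> a = b.
Proof.
move=> a1 b1 st sab.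
have : dotp (s *: a) (s *: a) = dotp (t *: b) (t *: b) by rewrite sab.
rewrite !dotpZl !dotpZr a1 b1 !mulr1 => /eqP; rewrite -subr_eq0.
have -> : s * s - t * t = (s - t) * (s + t) by ring.
rewrite mulf_eq0 subr_eq0 => /orP[/eqP st_eq|]; last first.
  by rewrite addr_eq0 => /eqP sE; move: st; rewrite sE mulNr oppr_gt0 -expr2 ltNge sqr_ge0.
have s0 : s != 0 by apply: contraTneq st => ->; rewrite mul0r ltxx.
by apply: (scalerI s0); rewrite sab st_eq.
Qed.

End DotProduct.

Lemma within_continuous_dotp_lt0 (R : realType) (d : nat) (B : set 'rV[R]_d)
    (w : 'rV[R]_d -> 'rV[R]_d) (n x : 'rV[R]_d) :
  {within B, continuous w} -> B x -> dotp (w x) n < 0 ->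
  exists2 del : R, 0 < del &
    forall y, B y -> `|x - y| < del -> dotp (w y) n < 0.
Proof.
move=> w_cont Bx wx_lt0; pose C := \sum_k `|n 0 k|.
have C_ge0 : 0 <= C by apply: sumr_ge0.
pose eps := - dotp (w x) n / (1 + C).
have eps_gt0 : 0 < eps by rewrite divr_gt0 //; lra.
have eps_C : eps * C < - dotp (w x) n.
  by rewrite /eps mulrAC ltr_pdivrMr; nra.
have near_wx : \forall y \near x, B y -> `|w x - w y| < eps.
  exact: (cvgrPdist_lt _ _).1 ((subspace_continuousP _ _).1 w_cont x Bx) eps eps_gt0.
have [del del_gt0 del_wx] := (nbhs_normP _ _).1 near_wx.
exists del => // y By xy; have wxy := del_wx y xy By.
have := dotp_le_norm (w x - w y) n; rewrite dotpBl -/C => le_C.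
have := ler_wpM2r C_ge0 (ltW wxy).
have := ler_norm (dotp (w y) n - dotp (w x) n); rewrite distrC; lra.
Qed.

Section Polyhedron.
Variables (R : realType) (d m : nat).
Variables (nrm : 'I_m -> 'rV[R]_d) (cst : 'I_m -> R).
Local Notation Omegabar := (inOmegabar nrm cst).

Definition active (x : 'rV[R]_d) : {set 'I_m} := [set j | dotp x (nrm j) == cst j].

Lemma activeP x j : reflect (dotp x (nrm j) = cst j) (j \in active x).
Proof. by rewrite inE; apply: eqP. Qed.

Lemma inactive_lt x j : Omegabar x -> j \notin active x -> dotp x (nrm j) < cst j.
Proof. by move=> x_in; rewrite inE lt_neqAle x_in andbT. Qed.

Lemma face_escape x z jm j0 (del : R) :
  Omegabar x -> (forall j, j \in active x -> dotp z (nrm j) <= 0) ->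
  jm \in active x -> dotp z (nrm jm) = 0 ->
  j0 \in active x -> dotp z (nrm j0) < 0 -> 0 < del ->
  exists y, [/\ onBoundary nrm cst y, `|x - y| < del, jm \in active y
              & (#|active y| < #|active x|)%N].
Proof.
move=> x_in z_le0 jm_act z_jm j0_act z_j0 del_gt0.
have [e e_gt0 e_small] := exists_uniform_small (fun j => j \notin active x)
  (fun j => dotp z (nrm j)) (fun j => cst j - dotp x (nrm j))
  (fun j j_in => ltac:(by rewrite subr_gt0 inactive_lt)).
pose a := Num.min e (del / (1 + `|z|)).
have a_gt0 : 0 < a by rewrite lt_min e_gt0 divr_gt0 ?ltr_pwDl.
have a_le_e : a <= e by rewrite ge_min lexx.
pose y := x + a *: z.
have y_nrm j : dotp y (nrm j) = dotp x (nrm j) + a * dotp z (nrm j).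
  by rewrite dotpDl dotpZl.
have y_inactive j : j \notin active x -> dotp y (nrm j) < cst j.
  move=> j_in; have := e_small j j_in; rewrite y_nrm.
  have := ler_wpM2r (normr_ge0 (dotp z (nrm j))) a_le_e.
  have := ler_wpM2l (ltW a_gt0) (ler_norm (dotp z (nrm j))); lra.
have y_active j : j \in active x -> dotp y (nrm j) = cst j + a * dotp z (nrm j).
  by move=> /activeP x_j; rewrite y_nrm x_j.
have y_in : Omegabar y.
  move=> j; have [j_act|j_in] := boolP (j \in active x); last exact/ltW/y_inactive.
  by rewrite y_active // gerDl pmulr_rle0 // z_le0.
have sub_act : active y \subset active x.
  apply/fintype.subsetP => j /activeP y_j; apply: contraT => j_in.
  by have := y_inactive j j_in; rewrite y_j ltxx.
have j0_nact : j0 \notin active y.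
  apply/activeP; rewrite y_active //.
  have : a * dotp z (nrm j0) < 0 by rewrite pmulr_rlt0.
  lra.
exists y; split.
- by split=> //; exists jm; rewrite y_active // z_jm mulr0 addr0.
- rewrite /y opprD addrA subrr add0r normrN normrZ gtr0_norm //.
  apply: (@le_lt_trans _ _ (del / (1 + `|z|) * `|z|)).
    by rewrite ler_wpM2r // ge_min lexx orbT.
  by rewrite mulrAC ltr_pdivrMr ?ltr_pwDl // ltr_pM2l //; lra.
- by apply/activeP; rewrite y_active // z_jm mulr0 addr0.
- by apply: proper_card; apply/properP; split=> //; exists j0.
Qed.

Lemma inward_perturb x u v :
  (forall j, j \in active x -> dotp u (nrm j) < 0) ->
  exists2 e : R, 0 < e & forall j, j \in active x -> dotp (u + e *: v) (nrm j) < 0.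
Proof.
move=> u_in; have [e e_gt0 e_small] := exists_uniform_small (fun j => j \in active x)
  (fun j => dotp v (nrm j)) (fun j => - dotp u (nrm j))
  (fun j j_act => ltac:(by rewrite oppr_gt0 u_in)).
exists e => // j j_act; rewrite dotpDl dotpZl; have := e_small j j_act.
have := ler_wpM2l (ltW e_gt0) (ler_norm (dotp v (nrm j))); lra.
Qed.

Lemma exists_step_in_closure (I : finType) (p v : I -> 'rV[R]_d) :
  (forall i, Omegabar (p i)) ->
  (forall i j, j \in active (p i) -> 0 <= dotp (v i) (nrm j)) ->
  exists2 dt : R, 0 < dt & forall i, Omegabar (p i - dt *: v i).
Proof.
move=> p_in v_out.
have [e e_gt0 e_small] := exists_uniform_small
  (fun ij : I * 'I_m => ij.2 \notin active (p ij.1))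
  (fun ij => dotp (v ij.1) (nrm ij.2)) (fun ij => cst ij.2 - dotp (p ij.1) (nrm ij.2))
  (fun ij ij_in => ltac:(by rewrite subr_gt0 inactive_lt)).
exists e => // i j; rewrite dotpBl dotpZl.
have [ij_act|ij_in] := boolP (j \in active (p i)).
  by move/activeP: (ij_act) => ->; rewrite gerBl (mulr_ge0 (ltW e_gt0)) ?v_out.
have := e_small (i, j) ij_in; have := ler_wpM2l (ltW e_gt0) (ler_norm (- dotp (v i) (nrm j))).
rewrite normrN /=; lra.
Qed.

End Polyhedron.

Section BoundaryField.
Variables (R : realType) (d m : nat).
Variables (nrm : 'I_m -> 'rV[R]_d) (cst : 'I_m -> R) (w : 'rV[R]_d -> 'rV[R]_d).
Hypothesis w_cont : {within [set x | onBoundary nrm cst x], continuous w}.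
Local Notation active := (active nrm cst).

(* With r_j = (w.n_j) / (u.n_j), stepping from x along g u - w, where g is the
   largest r_j, stays on the active face where g is attained (and w points
   outward) and leaves every active face with r_j < g. *)
Lemma active_ratios_eq x k :
  (forall y, (#|active y| < #|active x|)%N -> onBoundary nrm cst y ->
     forall j, j \in active y -> 0 <= dotp (w y) (nrm j)) ->
  onBoundary nrm cst x -> k \in active x -> dotp (w x) (nrm k) < 0 ->
  forall u, (forall j, j \in active x -> dotp u (nrm j) < 0) ->
  forall j, j \in active x ->
    dotp (w x) (nrm j) * dotp u (nrm k) = dotp (w x) (nrm k) * dotp u (nrm j).
Proof.
move=> IH x_bd k_act wk_lt0 u u_in j j_act.
apply/eqP/negPn/negP => cross_ne; exfalso.
pose al i := - dotp (w x) (nrm i); pose be i := - dotp u (nrm i).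
pose r i := al i / be i.
have be_gt0 i : i \in active x -> 0 < be i by move=> i_act; rewrite oppr_gt0 u_in.
have al_r i : i \in active x -> al i = r i * be i.
  by move=> i_act; rewrite divfK // gt_eqF ?be_gt0.
case: (@arg_maxP _ _ _ k (fun i => i \in active x) r k_act) => jm jm_act r_max.
pose g := r jm.
have r_le i : i \in active x -> r i <= g by move=> /r_max.
have g_gt0 : 0 < g.
  by apply: lt_le_trans (r_le k k_act); rewrite divr_gt0 ?be_gt0 // oppr_gt0.
pose z := - w x + g *: u.
have z_nrm i : i \in active x -> dotp z (nrm i) = be i * (r i - g).
  by move=> i_act; rewrite dotpDl dotpNl dotpZl -/(al i) al_r // /be; ring.
have [j0 j0_act r_j0] : exists2 j0, j0 \in active x & r j0 < g.
  have r_jk : r j != r k.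
    apply: contra_neq cross_ne => r_jk.
    suff : al j * be k = al k * be j by rewrite /al /be !mulrNN.
    by rewrite !al_r // r_jk; ring.
  have [g_rj|g_rj] := eqVneq g (r j); last by exists j; rewrite // lt_def g_rj r_le.
  by exists k; rewrite // lt_def r_le // andbT g_rj.
have wx_jm : dotp (w x) (nrm jm) < 0.
  by rewrite -oppr_gt0 -/(al jm) al_r // mulr_gt0 ?be_gt0.
have [del del_gt0 near_jm] := within_continuous_dotp_lt0 w_cont x_bd wx_jm.
have [y [y_bd xy jm_y card_y]] := face_escape (z := z) x_bd.1
  (fun i i_act => ltac:(by rewrite z_nrm // pmulr_rle0 ?be_gt0 // subr_le0 r_le))
  jm_act (ltac:(by rewrite z_nrm // subrr mulr0)) j0_act
  (ltac:(by rewrite z_nrm // pmulr_rlt0 ?be_gt0 // subr_lt0)) del_gt0.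
by have := IH y card_y y_bd jm jm_y; rewrite leNgt near_jm.
Qed.

Hypothesis nrm_unit : forall k, dotp (nrm k) (nrm k) = 1.
Hypothesis w_tan : tangential nrm cst w.
Variable x0 : 'rV[R]_d.
Hypothesis x0_in : inOmega nrm cst x0.

Lemma tangential_inward x : onBoundary nrm cst x ->
  forall k, k \in active x -> 0 <= dotp (w x) (nrm k).
Proof.
have [n] := ubnP #|active x|; elim: n x => // n IH x card_x x_bd k k_act.
rewrite leNgt; apply/negP => wk_lt0.
have cross := active_ratios_eq
  (fun y card_y => IH y (leq_trans card_y card_x)) x_bd k_act wk_lt0.
have u0_in j : j \in active x -> dotp (x0 - x) (nrm j) < 0.
  by move=> /activeP x_j; rewrite dotpBl x_j subr_lt0 x0_in.
suff same_nrm j : j \in active x -> nrm j = nrm k.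
  have x_k : dotp x (nrm k) = cst k by apply/activeP.
  suff : dotp (w x) (nrm k) = 0 by move=> wk0; rewrite wk0 ltxx in wk_lt0.
  by apply: w_tan x_bd.1 x_k _ => j /activeP/same_nrm.
move=> j_act.
(* c is orthogonal to the open cone of inward directions, hence c = 0. *)
pose c := dotp (w x) (nrm j) *: nrm k - dotp (w x) (nrm k) *: nrm j.
have c_orth u : (forall i, i \in active x -> dotp u (nrm i) < 0) -> dotp u c = 0.
  by move=> u_in; rewrite dotpBr !dotpZr cross // subrr.
have [e e_gt0 ue_in] := inward_perturb c u0_in.
have c0 : c = 0.
  apply/eqP; rewrite -dotp_eq0; have := c_orth _ ue_in.
  by rewrite dotpDl dotpZl c_orth // add0r => /eqP; rewrite mulf_eq0 gt_eqF.
have wj_lt0 : dotp (w x) (nrm j) < 0.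
  have : 0 < dotp (w x) (nrm k) * dotp (x0 - x) (nrm j) by rewrite nmulr_rgt0 ?u0_in.
  by rewrite -cross // nmulr_lgt0 ?u0_in.
apply: (unit_proportional_eq (s := dotp (w x) (nrm k)) (t := dotp (w x) (nrm j))) => //.
  by rewrite nmulr_rgt0.
by apply/eqP; rewrite eq_sym -subr_eq0 -/c c0.
Qed.

End BoundaryField.

Section ReferenceCube.
Variables (R : realType) (d : nat).

Definition corner (a : {ffun 'I_d -> bool}) : 'rV[R]_d := \row_j (a j)%:R.

Lemma shape_corner a b : Defs.shape b (corner a) = (b == a)%:R.
Proof.
rewrite /Defs.shape; have [->|b_ne_a] := eqVneq b a.
  by apply: big1 => j _; rewrite mxE; case: (a j); rewrite ?subr0.
have [j bj_ne_aj] : exists j, b j != a j.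
  apply/existsP; apply: contraNT b_ne_a => /existsPn ba.
  by apply/eqP/ffunP => j; apply/eqP/negPn.
rewrite (bigD1 j) //= mxE; move: bj_ne_aj.
by case: (b j); case: (a j) => //= _; rewrite ?subrr mul0r.
Qed.

Lemma cube_corner a : cube (corner a).
Proof. by move=> j; rewrite mxE; case: (a j); rewrite /= ?lexx ?ler01. Qed.

Lemma shape_ge0 a (xi : 'rV[R]_d) : cube xi -> 0 <= Defs.shape a xi.
Proof.
move=> xi_cube; apply: prodr_ge0 => j _; have /andP[xi_ge0 xi_le1] := xi_cube j.
by case: (a j); rewrite ?subr_ge0.
Qed.

Variables (V K : finType) (xv : V -> 'rV[R]_d) (loc : K -> {ffun 'I_d -> bool} -> V).

Lemma refmap_corner T a : refmap xv loc T (corner a) = xv (loc T a).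
Proof.
rewrite /refmap (bigD1 a) //= shape_corner eqxx scale1r big1 ?addr0 // => b b_ne_a.
by rewrite shape_corner (negbTE b_ne_a) scale0r.
Qed.

Variables (m : nat) (nrm : 'I_m -> 'rV[R]_d) (cst : 'I_m -> R).
Hypothesis mesh : conforming_mesh nrm cst xv loc.

Lemma mesh_cover y : inOmegabar nrm cst y ->
  exists T xi, cube xi /\ refmap xv loc T xi = y.
Proof.
have [_ [_ [_ [_ [cover _]]]]] := mesh.
rewrite -[inOmegabar _ _ y]/([set x | inOmegabar nrm cst x] y) -cover.
by move=> [T [xi xi_cube <-]]; exists T, xi.
Qed.

Lemma mesh_vertex_closure i : inOmegabar nrm cst (xv i).
Proof.
have [_ [_ [_ [_ [cover [vertex_corner _]]]]]] := mesh.
have [T [a <-]] := vertex_corner i.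
rewrite -[inOmegabar _ _ _]/([set x | inOmegabar nrm cst x] (xv (loc T a))) -cover.
by exists T, (corner a); [exact: cube_corner | exact: refmap_corner].
Qed.

End ReferenceCube.

Section ConformationUpdate.
Variables (R : realType) (d : nat).
Implicit Types (v : 'rV[R]_d) (M S F : 'M[R]_d) (Wi dt : R).

Definition qform v M : R := (v *m M *m v^T) 0 0.
Definition psd M : Prop := M^T = M /\ forall v, 0 <= qform v M.

Lemma qformD v M S : qform v (M + S) = qform v M + qform v S.
Proof. by rewrite /qform mulmxDr mulmxDl mxE. Qed.

Lemma qformZ v (c : R) M : qform v (c *: M) = c * qform v M.
Proof. by rewrite /qform -scalemxAr -scalemxAl mxE. Qed.

Lemma qform1 v : qform v 1%:M = dotp v v.
Proof. by rewrite /qform mulmx1. Qed.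

Lemma posdef_psd M : posdef M -> psd M.
Proof.
move=> [M_sym M_pos]; split=> // v; have [->|v0] := eqVneq v 0; last exact/ltW/M_pos.
by rewrite /qform !mul0mx mxE.
Qed.

Lemma psd_comb (I : finType) (c : I -> R) (S : I -> 'M[R]_d) :
  (forall i, 0 <= c i) -> (forall i, psd (S i)) -> psd (\sum_i c i *: S i).
Proof.
move=> c_ge0 S_psd; split.
  by rewrite linear_sum; apply: eq_bigr => i _; rewrite linearZ /= (S_psd i).1.
move=> v; rewrite /qform mulmx_sumr mulmx_suml summxE; apply: sumr_ge0 => i _.
by rewrite -/(qform _ _) qformZ mulr_ge0 ?(S_psd i).2.
Qed.

Lemma psd_congr F S : psd S -> psd (F *m S *m F^T).
Proof.
move=> [S_sym S_ge0]; split; first by rewrite !trmx_mul trmxK S_sym mulmxA.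
by move=> v; have := S_ge0 (v *m F); rewrite /qform trmx_mul !mulmxA.
Qed.

Definition conf_update Wi dt M := (Wi + dt)^-1 *: (Wi *: M + dt *: 1%:M).

Lemma conf_updateP Wi dt M S : 0 < Wi -> 0 < dt ->
  dt^-1 *: (S - M) + Wi^-1 *: (S - 1%:M) = 0 <-> S = conf_update Wi dt M.
Proof.
move=> Wi_gt0 dt_gt0; have Wi0 : Wi != 0 by rewrite gt_eqF.
have dt0 : dt != 0 by rewrite gt_eqF.
have Widt0 : Wi + dt != 0 by rewrite gt_eqF ?addr_gt0.
split=> [/matrixP eq0|->]; apply/matrixP => r c; last first.
  by rewrite !mxE; field; rewrite Widt0 dt0 Wi0.
have := eq0 r c; rewrite !mxE; move: (S r c) (M r c) (_%:R) => s x y eq0rc.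
apply: (mulfI Widt0); rewrite mulVKf //.
have -> : Wi * x + dt * y = (Wi + dt) * s - dt * Wi * (dt^-1 * (s - x) + Wi^-1 * (s - y)).
  by field; rewrite dt0 Wi0.
by rewrite eq0rc mulr0 subr0.
Qed.

Lemma posdef_conf_update Wi dt M : 0 < Wi -> 0 < dt -> psd M ->
  posdef (conf_update Wi dt M).
Proof.
move=> Wi_gt0 dt_gt0 [M_sym M_ge0]; split.
  by rewrite /conf_update !linearZ /= linearD !linearZ /= M_sym trmx1.
move=> v v0; rewrite -/(qform _ _) qformZ qformD !qformZ qform1.
apply: mulr_gt0; first by rewrite invr_gt0 addr_gt0.
apply: ltr_wpDl; first exact: mulr_ge0 (ltW Wi_gt0) (M_ge0 v).
exact: mulr_gt0 dt_gt0 (dotp_gt0 v0).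
Qed.

End ConformationUpdate.

Lemma psd_q1m (R : realType) (d : nat) (V K : finType)
    (loc : K -> {ffun 'I_d -> bool} -> V) (S : V -> 'M[R]_d) T xi :
  (forall i, posdef (S i)) -> cube xi -> psd (q1m loc S T xi).
Proof.
by move=> S_pd xi_cube; apply: psd_comb => [a|a]; [exact: shape_ge0 | exact/posdef_psd].
Qed.

Theorem proposition5 (R : realType) (d : nat) (V K : finType)
  (xv : V -> 'rV[R]_d) (loc : K -> {ffun 'I_d -> bool} -> V)
  (m : nat) (nrm : 'I_m -> 'rV[R]_d) (cst : 'I_m -> R)
  (Wi beta : R) (w : 'rV[R]_d -> 'rV[R]_d) (sigma0 : 'rV[R]_d -> 'M[R]_d) :
  (d = 2 \/ d = 3)%N ->
  convex_polygonal_domain nrm cst ->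
  conforming_mesh nrm cst xv loc ->
  0 < Wi -> 0 < beta < 1 ->
  {within [set x | onBoundary nrm cst x], continuous w} ->
  tangential nrm cst w ->
  (forall x, inOmegabar nrm cst x -> posdef (sigma0 x)) ->
  (* Sigma^0 (nodal interpolant of sigma^0) is positive definite *)
  (forall i, posdef (sigma0 (xv i))) /\
  (* and at each time step n >= 1: if Sigma^{n-1} is positive definite and
     (u^n, p^n) solves step (i), then some dt > 0 makes step (ii)
     well defined and every resulting Sigma^n positive definite *)
  (forall (Sprev : V -> 'M[R]_d) (U : V -> 'rV[R]_d) (P : V -> R),
     (forall i, posdef (Sprev i)) ->
     stokes_step nrm cst xv loc beta Wi w Sprev U P ->
     exists dt : R, 0 < dt /\
       (exists Snew, transport_step xv loc Wi dt U Sprev Snew) /\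
       (forall Snew, transport_step xv loc Wi dt U Sprev Snew ->
          forall i, posdef (Snew i))).
Proof.
move=> _ [nrm_unit [[x0 x0_in] _]] mesh Wi_gt0 _ w_cont w_tan sigma0_pd.
have vertex_in := mesh_vertex_closure mesh.
split=> [i|Sprev U P Sprev_pd [U_bd _]]; first exact/sigma0_pd/vertex_in.
have U_inward i j : j \in active nrm cst (xv i) -> 0 <= dotp (U i) (nrm j).
  move=> j_act; have xi_bd : onBoundary nrm cst (xv i).
    by split; [exact: vertex_in | exists j; apply/activeP].
  by rewrite U_bd //; exact: (tangential_inward w_cont nrm_unit w_tan x0_in xi_bd j_act).
have [dt dt_gt0 foot_in] := exists_step_in_closure vertex_in U_inward.
have /choice[foot foot_elem] : forall i, exists Txi : K * 'rV[R]_d,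
    cube Txi.2 /\ refmap xv loc Txi.1 Txi.2 = xv i - dt *: U i.
  by move=> i; have [T [xi xi_foot]] := mesh_cover mesh (foot_in i); exists (T, xi).
pose F i := 1%:M + dt *: nodalgrad xv loc U i.
exists dt; split=> //; split.
  exists (fun i => conf_update Wi dt (F i *m q1m loc Sprev (foot i).1 (foot i).2 *m (F i)^T)).
  move=> i; exists (foot i).1, (foot i).2; have [xi_cube xi_foot] := foot_elem i.
  by split=> //; split=> //; apply/conf_updateP.
move=> Snew step i; have [T [xi [xi_cube [_ /conf_updateP Snew_i]]]] := step i.
rewrite Snew_i //; apply: posdef_conf_update => //.
exact/psd_congr/psd_q1m.
Qed.
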